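(* Let $G$ be a dicotic nonzugzwang scoring game all of whose terminal positions are numbers. Then $G_{\sigma(G)}=m(G)$.
   Context: A scoring game is $G=\langle G^L\mid G^R\rangle$ with $G^L,G^R$ finite nonempty sets of scoring games or empty sets decorated with a real, $\emptyset^s$; $\langle\emptyset^s\mid\emptyset^s\rangle$ is the number $s$. $Ls(\langle\emptyset^s\mid G^R\rangle)=s$, $Rs(\langle G^L\mid\emptyset^s\rangle)=s$, otherwise $Ls(G)=\max_{G^l\in G^L}Rs(G^l)$, $Rs(G)=\min_{G^r\in G^R}Ls(G^r)$. Disjunctive sum $G_1+G_2$: Left options are all $G_1^l+G_2$, $G_1+G_2^l$ (Left side $\emptyset^{\ell_1+\ell_2}$ if neither has Left options); symmetrically for Right; $H+c$ for a number $c$ adds $c$ to every terminal score; $nG$ is the sum of $n$ copies of $G$. Dicotic: at every position both players have options or neither; nonzugzwang: $Ls(H)\ge Rs(H)$ at every position. For dicotic nonzugzwang $G$, the limits $\lim_{n\to\infty}Ls(nG)/n$ and $\lim_{n\to\infty}Rs(nG)/n$ exist and are equal (Milnor); their common value is the mean $m(G)$. Cooling: if $G$ is a number $k$, $G_t=k$, $\sigma(G)=0$; otherwise $\widetilde G_t=\langle \{G^l_t-t\}\mid \{G^r_t+t\}\rangle$, $t_0=\min\{t\ge0: Ls(\widetilde G_t)=Rs(\widetilde G_t)\}$, $G_t=\widetilde G_t$ for $t\le t_0$ and $G_t$ is the number $Ls(\widetilde G_{t_0})$ for $t>t_0$; $\sigma(G)=t_0$ is the temperature. Thus $G_{\sigma(G)}$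 is a number (namely $Ls(\widetilde G_{\sigma(G)})=Rs(\widetilde G_{\sigma(G)})$). *)

From Stdlib Require Import Reals List ClassicalEpsilon.
Import ListNotations.
Open Scope R_scope.

(** Scoring games  G = < G^L | G^R >.  Each side is either the empty set
    decorated with a real (Empty s = \emptyset^s) or a finite NONEMPTY
    set of options (Opts h hs = {h} ∪ hs). *)
Inductive game : Type :=
  | Game : side -> side -> game
with side : Type :=
  | Empty : R -> side
  | Opts : game -> list game -> side.

Definition num (s : R) : game := Game (Empty s) (Empty s).

Definition side_opts (s : side) : list game :=
  match s with Empty _ => [] | Opts h hs => h :: hs end.

Definition left_side (g : game) : side := match g with Game l _ => l end.
Definition right_side (g : game) : side := match g with Game _ r => r end.

Fixpoint scores (g : game) : R * R :=
  match g with
  | Game l r =>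
      (match l with
       | Empty s => s
       | Opts h hs => fold_right Rmax (snd (scores h)) (map (fun x => snd (scores x)) hs)
       end,
       match r with
       | Empty s => s
       | Opts h hs => fold_right Rmin (fst (scores h)) (map (fun x => fst (scores x)) hs)
       end)
  end.

Definition Ls (g : game) : R := fst (scores g).
Definition Rs (g : game) : R := snd (scores g).

Definition mk_side (d : R) (l : list game) : side :=
  match l with [] => Empty d | h :: t => Opts h t end.

Definition side_dec (s : side) : R := match s with Empty a => a | Opts _ _ => 0 end.

Fixpoint add (g1 : game) : game -> game :=
  fix add1 (g2 : game) : game :=
    match g1, g2 with
    | Game l1 r1, Game l2 r2 =>
        Game
          (mk_side (side_dec l1 + side_dec l2)
             ((match l1 with Empty _ => [] | Opts h hs => add h g2 :: map (fun x => add x g2) hs end)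
              ++ (match l2 with Empty _ => [] | Opts h hs => add1 h :: map add1 hs end)))
          (mk_side (side_dec r1 + side_dec r2)
             ((match r1 with Empty _ => [] | Opts h hs => add h g2 :: map (fun x => add x g2) hs end)
              ++ (match r2 with Empty _ => [] | Opts h hs => add1 h :: map add1 hs end)))
    end.

Fixpoint nsum (n : nat) (g : game) : game :=
  match n with
  | O => num 0
  | S O => g
  | S m => add g (nsum m g)
  end.

Definition is_option (h g : game) : Prop :=
  In h (side_opts (left_side g)) \/ In h (side_opts (right_side g)).

Inductive position : game -> game -> Prop :=
  | pos_refl g : position g g
  | pos_step k h g : is_option h g -> position k h -> position k g.

Definition has_options (s : side) : Prop := side_opts s <> [].

Definition dicotic (G : game) : Prop :=
  forall H, position H G -> (has_options (left_side H) <-> has_options (right_side H)).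

Definition nonzugzwang (G : game) : Prop :=
  forall H, position H G -> Ls H >= Rs H.

Definition terminals_are_numbers (G : game) : Prop :=
  forall H a b, position H G -> H = Game (Empty a) (Empty b) -> a = b.

Definition is_number (g : game) : bool :=
  match g with
  | Game (Empty a) (Empty b) => if Req_EM_T a b then true else false
  | _ => false
  end.

(** min { t >= 0 : Ls (f t) = Rs (f t) }  (chosen by epsilon; meaningful when the
    minimum exists). *)
Definition min_zero (f : R -> game) : R :=
  epsilon (inhabits 0) (fun t0 => 0 <= t0 /\ Ls (f t0) = Rs (f t0) /\
     forall t, 0 <= t -> Ls (f t) = Rs (f t) -> t0 <= t).

Fixpoint cool (g : game) : R -> game :=
  match g with
  | Game l r =>
      let tl : R -> game := fun s =>
        Game
          (match l with
           | Empty a => Empty a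
           | Opts h hs => Opts (add (cool h s) (num (- s))) (map (fun x => add (cool x s) (num (- s))) hs)
           end)
          (match r with
           | Empty a => Empty a
           | Opts h hs => Opts (add (cool h s) (num s)) (map (fun x => add (cool x s) (num s)) hs)
           end) in
      if is_number g then (fun _ => g)
      else
        let t0 := min_zero tl in
        fun t => if Rle_dec t t0 then tl t else num (Ls (tl t0))
  end.

Definition cool_tilde (g : game) (s : R) : game :=
  match g with
  | Game l r =>
      Game
        (match l with
         | Empty a => Empty a
         | Opts h hs => Opts (add (cool h s) (num (- s))) (map (fun x => add (cool x s) (num (- s))) hs)
         end)
        (match r with
         | Empty a => Empty a
         | Opts h hs => Opts (add (cool h s) (num s)) (map (fun x => add (cool x s) (num s)) hs)
         end)
  end.

Definition temperature (g : game) : R :=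
  if is_number g then 0 else min_zero (cool_tilde g).

(* Write X_t for X cooled by t.  Ls(X_t) decreases and Rs(X_t) increases in t, both with
   slope at most 1, and they cross for large t; this makes the temperature well defined and
   shows that, once t exceeds it, X_t is the number m := Ls(X_sigma).
   The key estimate: for positions X_1, ..., X_k of G and t >= 0,
     Ls(sum X_i,t) <= Ls(sum X_i) <= Ls(sum X_i,t) + t,
     Rs(sum X_i,t) - t <= Rs(sum X_i) <= Rs(sum X_i,t).  A move in a component still hot at t is matched
   by the same move in the cooled sum, which charges exactly t; a move in a component
   frozen at t is controlled by Milnor's inequalities for sums of dicotic nonzugzwang games.
   When the cooled sum has no move at all, every component is frozen at t and the bound
   comes from the same estimate at the largest of their temperatures, which is an induction
   on the number of positions of G colder than t.
   For t = sigma(G) the cooled sum (nG)_t is n copies of the number m, so Ls(nG) and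
   Rs(nG) lie within sigma(G) of n m. *)

From Stdlib Require Import Reals Lra List ClassicalEpsilon Classical Arith Lia.
Import ListNotations.
Open Scope R_scope.

Definition side_of (b : bool) (g : game) : side := if b then left_side g else right_side g.
Definition options (b : bool) (g : game) : list game := side_opts (side_of b g).
Definition empty_score (b : bool) (g : game) : R := side_dec (side_of b g).

Fixpoint game_size (g : game) : nat :=
  match g with Game l r => S (side_size l + side_size r) end
with side_size (s : side) : nat :=
  match s with Empty _ => 0 | Opts h hs => game_size h + list_sum (map game_size hs) end.

Lemma game_size_option b g x : In x (options b g) -> (game_size x < game_size g)%nat.
Proof.
  assert (Hside : forall s, In x (side_opts s) -> (game_size x <= side_size s)%nat).
  { intros [a|h hs] Hx; [destruct Hx|]. cbn in Hx |- *. destruct Hx as [<-|Hx]; [lia|].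
    enough ((game_size x <= list_sum (map game_size hs))%nat) by lia.
    induction hs as [|y hs IH]; simpl map; simpl list_sum; simpl In in Hx; [destruct Hx|].
    destruct Hx as [<-|Hx]; [lia | specialize (IH Hx); lia]. }
  destruct g as [l r], b; intro Hx; specialize (Hside _ Hx); cbn in Hside |- *; lia.
Qed.

Lemma fold_Rmax_spec {A} (f : A -> R) h hs :
  (forall x, In x (h :: hs) -> f x <= fold_right Rmax (f h) (map f hs)) /\
  exists x, In x (h :: hs) /\ fold_right Rmax (f h) (map f hs) = f x.
Proof.
  induction hs as [|y hs [IHle [x [Hx Ex]]]]; cbn.
  - split; [intros x [<-|[]]; lra | exists h; auto].
  - split.
    + intros z [<-|[<-|Hz]]; [| apply Rmax_l |];
        (eapply Rle_trans; [apply IHle; cbn; auto | apply Rmax_r]).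
    + destruct (Rle_dec (f y) (fold_right Rmax (f h) (map f hs))).
      * rewrite Rmax_right by lra. exists x. cbn in Hx |- *. tauto.
      * rewrite Rmax_left by lra. exists y; cbn; auto.
Qed.

Lemma fold_Rmin_spec {A} (f : A -> R) h hs :
  (forall x, In x (h :: hs) -> fold_right Rmin (f h) (map f hs) <= f x) /\
  exists x, In x (h :: hs) /\ fold_right Rmin (f h) (map f hs) = f x.
Proof.
  induction hs as [|y hs [IHle [x [Hx Ex]]]]; cbn.
  - split; [intros x [<-|[]]; lra | exists h; auto].
  - split.
    + intros z [<-|[<-|Hz]]; [| apply Rmin_l |];
        (eapply Rle_trans; [apply Rmin_r | apply IHle; cbn; auto]).
    + destruct (Rle_dec (f y) (fold_right Rmin (f h) (map f hs))).
      * rewrite Rmin_left by lra. exists y; cbn; auto.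
      * rewrite Rmin_right by lra. exists x. cbn in Hx |- *. tauto.
Qed.

Lemma Ls_nil g : options true g = [] -> Ls g = empty_score true g.
Proof. destruct g as [[a|h hs] r]; [reflexivity | discriminate]. Qed.

Lemma Rs_nil g : options false g = [] -> Rs g = empty_score false g.
Proof. destruct g as [l [a|h hs]]; [reflexivity | discriminate]. Qed.

Lemma Ls_ge_option g x : In x (options true g) -> Rs x <= Ls g.
Proof.
  destruct g as [[a|h hs] r]; [intros []|].
  apply (proj1 (fold_Rmax_spec (fun x => snd (scores x)) h hs)).
Qed.

Lemma Rs_le_option g x : In x (options false g) -> Rs g <= Ls x.
Proof.
  destruct g as [l [a|h hs]]; [intros []|].
  apply (proj1 (fold_Rmin_spec (fun x => fst (scores x)) h hs)).
Qed.

Lemma Ls_attained g : options true g <> [] -> exists x, In x (options true g) /\ Ls g = Rs x.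
Proof.
  destruct g as [[a|h hs] r]; [tauto|].
  intros _. apply (proj2 (fold_Rmax_spec (fun x => snd (scores x)) h hs)).
Qed.

Lemma Rs_attained g : options false g <> [] -> exists x, In x (options false g) /\ Rs g = Ls x.
Proof.
  destruct g as [l [a|h hs]]; [tauto|].
  intros _. apply (proj2 (fold_Rmin_spec (fun x => fst (scores x)) h hs)).
Qed.

Lemma Ls_le_bound g M :
  options true g <> [] -> (forall x, In x (options true g) -> Rs x <= M) -> Ls g <= M.
Proof. intros Hne H. destruct (Ls_attained g Hne) as [x [Hx ->]]. auto. Qed.

Lemma Rs_ge_bound g M :
  options false g <> [] -> (forall x, In x (options false g) -> M <= Ls x) -> M <= Rs g.
Proof. intros Hne H. destruct (Rs_attained g Hne) as [x [Hx ->]]. auto. Qed.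

Lemma nil_or_not {A} (l : list A) : l = [] \/ l <> [].
Proof. destruct l; [left | right]; congruence. Qed.

Lemma options_num b a : options b (num a) = [].
Proof. destruct b; reflexivity. Qed.

Lemma number_options b X : is_number X = true -> options b X = [].
Proof. destruct X as [[a|h hs] [c|h' hs']], b; easy. Qed.

Lemma option_not_number b X x : In x (options b X) -> is_number X = false.
Proof.
  intro Hx. destruct (is_number X) eqn:HN; [|reflexivity].
  rewrite number_options in Hx by exact HN. destruct Hx.
Qed.

Lemma number_eq_num X : is_number X = true -> X = num (Ls X).
Proof.
  destruct X as [[a|h hs] [c|h' hs']]; cbn; try discriminate.
  destruct (Req_EM_T a c) as [<-|]; easy.
Qed.

Lemma is_number_num a : is_number (num a) = true.
Proof. cbn. destruct (Req_EM_T a a); congruence. Qed.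

Lemma is_number_of_nil X : options true X = [] -> options false X = [] ->
  empty_score true X = empty_score false X -> is_number X = true.
Proof.
  destruct X as [[a|h hs] [c|h' hs']]; cbn; try discriminate.
  intros _ _ ->. apply is_number_num.
Qed.

Lemma add_unfold l1 r1 l2 r2 : add (Game l1 r1) (Game l2 r2) =
  Game (mk_side (side_dec l1 + side_dec l2)
          (map (fun x => add x (Game l2 r2)) (side_opts l1) ++ map (add (Game l1 r1)) (side_opts l2)))
       (mk_side (side_dec r1 + side_dec r2)
          (map (fun x => add x (Game l2 r2)) (side_opts r1) ++ map (add (Game l1 r1)) (side_opts r2))).
Proof. destruct l1, l2, r1, r2; reflexivity. Qed.

Lemma options_add b X Y :
  options b (add X Y) = map (fun x => add x Y) (options b X) ++ map (add X) (options b Y).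
Proof.
  destruct X as [l1 r1], Y as [l2 r2]. unfold options, side_of. rewrite add_unfold.
  destruct b; cbn; [destruct (_ ++ _) | destruct (_ ++ _)]; reflexivity.
Qed.

Lemma empty_score_add b X Y : options b X = [] -> options b Y = [] ->
  empty_score b (add X Y) = empty_score b X + empty_score b Y.
Proof.
  destruct X as [l1 r1], Y as [l2 r2]. unfold options, empty_score, side_of. rewrite add_unfold.
  destruct b; cbn; intros -> ->; reflexivity.
Qed.

Lemma in_options_add b X Y z : In z (options b (add X Y)) <->
  (exists x, In x (options b X) /\ z = add x Y) \/ (exists y, In y (options b Y) /\ z = add X y).
Proof.
  rewrite options_add, in_app_iff, !in_map_iff.
  split; intros [[w [E H]]|[w [E H]]]; [left|right|left|right]; exists w; auto.
Qed.

Lemma options_add_nil b X Y : options b (add X Y) = [] <-> options b X = [] /\ options b Y = [].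
Proof.
  rewrite options_add. split.
  - intro E. apply app_eq_nil in E as [E1 E2]. apply map_eq_nil in E1, E2. auto.
  - intros [-> ->]. reflexivity.
Qed.

(** * Shifted games *)

Lemma game_pair_ind (P : game -> game -> Prop) :
  (forall A B, (forall A' B', (game_size A' + game_size B' < game_size A + game_size B)%nat ->
     P A' B') -> P A B) ->
  forall A B, P A B.
Proof.
  intros Hstep A B.
  apply (induction_ltof1 _ (fun p => game_size (fst p) + game_size (snd p))%nat
           (fun p => P (fst p) (snd p)) ) with (a := (A, B)).
  intros [A' B'] IH. apply Hstep. intros A'' B'' Hlt. exact (IH (A'', B'') Hlt).
Qed.

(* A bisimulation rather than an equation: the option lists of [X] and [Y] may differ
   in order and multiplicity. *)
Inductive shifted (c : R) (X Y : game) : Prop :=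
  | shifted_intro :
      (forall b, options b X = [] <-> options b Y = []) ->
      (forall b, options b X = [] -> empty_score b Y = empty_score b X + c) ->
      (forall b x, In x (options b X) -> exists y, In y (options b Y) /\ shifted c x y) ->
      (forall b y, In y (options b Y) -> exists x, In x (options b X) /\ shifted c x y) ->
      shifted c X Y.

Lemma shifted_scores c X Y : shifted c X Y -> Ls Y = Ls X + c /\ Rs Y = Rs X + c.
Proof.
  revert Y. induction X as [X IH] using (induction_ltof1 _ game_size).
  intros Y [Hnil Hdec Hfwd Hbwd].
  assert (IHo : forall b x y, In x (options b X) -> shifted c x y -> Ls y = Ls x + c /\ Rs y = Rs x + c)
    by (intros b x y Hx; apply IH, (game_size_option b), Hx).
  split.
  - destruct (nil_or_not (options true X)) as [E|E].
    + rewrite (Ls_nil X E), (Ls_nil Y (proj1 (Hnil true) E)). apply Hdec, E.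
    + assert (E' : options true Y <> []) by (rewrite <- (Hnil true); exact E).
      apply Rle_antisym.
      * apply Ls_le_bound; auto. intros y Hy. destruct (Hbwd true y Hy) as [x [Hx Sx]].
        rewrite (proj2 (IHo _ _ _ Hx Sx)). pose proof (Ls_ge_option X x Hx). lra.
      * destruct (Ls_attained X E) as [x [Hx ->]]. destruct (Hfwd true x Hx) as [y [Hy Sy]].
        rewrite <- (proj2 (IHo _ _ _ Hx Sy)). apply Ls_ge_option, Hy.
  - destruct (nil_or_not (options false X)) as [E|E].
    + rewrite (Rs_nil X E), (Rs_nil Y (proj1 (Hnil false) E)). apply Hdec, E.
    + assert (E' : options false Y <> []) by (rewrite <- (Hnil false); exact E).
      apply Rle_antisym.
      * destruct (Rs_attained X E) as [x [Hx ->]]. destruct (Hfwd false x Hx) as [y [Hy Sy]].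
        rewrite <- (proj1 (IHo _ _ _ Hx Sy)). apply Rs_le_option, Hy.
      * apply Rs_ge_bound; auto. intros y Hy. destruct (Hbwd false y Hy) as [x [Hx Sx]].
        rewrite (proj1 (IHo _ _ _ Hx Sx)). pose proof (Rs_le_option X x Hx). lra.
Qed.

Lemma shifted_refl X : shifted 0 X X.
Proof.
  induction X as [X IH] using (induction_ltof1 _ game_size).
  constructor; [tauto | intros; lra | |];
    intros b x Hx; exists x; split; auto; apply IH, (game_size_option b), Hx.
Qed.

Lemma shifted_trans c1 c2 X Y Z : shifted c1 X Y -> shifted c2 Y Z -> shifted (c1 + c2) X Z.
Proof.
  revert Y Z. induction X as [X IH] using (induction_ltof1 _ game_size).
  intros Y Z [Hnil Hdec Hfwd Hbwd] [Hnil' Hdec' Hfwd' Hbwd'].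
  constructor.
  - intro b. rewrite (Hnil b). apply Hnil'.
  - intros b E. rewrite (Hdec' b (proj1 (Hnil b) E)), (Hdec b E). lra.
  - intros b x Hx. destruct (Hfwd b x Hx) as [y [Hy Sy]]. destruct (Hfwd' b y Hy) as [z [Hz Sz]].
    exists z. split; auto. eapply IH; eauto. apply (game_size_option b), Hx.
  - intros b z Hz. destruct (Hbwd' b z Hz) as [y [Hy Sy]]. destruct (Hbwd b y Hy) as [x [Hx Sx]].
    exists x. split; auto. eapply IH; eauto. apply (game_size_option b), Hx.
Qed.

Lemma shifted_add c1 c2 X1 X2 Y1 Y2 :
  shifted c1 X1 Y1 -> shifted c2 X2 Y2 -> shifted (c1 + c2) (add X1 X2) (add Y1 Y2).
Proof.
  revert Y1 Y2. pattern X1, X2. revert X1 X2. apply game_pair_ind. intros A B IH Y1 Y2 HA HB.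
  pose proof HA as [Hnil Hdec Hfwd Hbwd]. pose proof HB as [Hnil' Hdec' Hfwd' Hbwd'].
  constructor.
  - intro b. rewrite !options_add_nil, (Hnil b), (Hnil' b). reflexivity.
  - intros b E. apply options_add_nil in E as [E1 E2].
    pose proof (proj1 (Hnil b) E1). pose proof (proj1 (Hnil' b) E2).
    rewrite !empty_score_add, (Hdec b E1), (Hdec' b E2) by assumption. lra.
  - intros b z Hz. apply in_options_add in Hz as [[x [Hx ->]]|[x [Hx ->]]].
    + destruct (Hfwd b x Hx) as [y [Hy Sy]]. exists (add y Y2). split.
      * apply in_options_add. left; eauto.
      * apply IH; auto. pose proof (game_size_option _ _ _ Hx). lia.
    + destruct (Hfwd' b x Hx) as [y [Hy Sy]]. exists (add Y1 y). split.
      * apply in_options_add. right; eauto.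
      * apply IH; auto. pose proof (game_size_option _ _ _ Hx). lia.
  - intros b z Hz. apply in_options_add in Hz as [[y [Hy ->]]|[y [Hy ->]]].
    + destruct (Hbwd b y Hy) as [x [Hx Sx]]. exists (add x B). split.
      * apply in_options_add. left; eauto.
      * apply IH; auto. pose proof (game_size_option _ _ _ Hx). lia.
    + destruct (Hbwd' b y Hy) as [x [Hx Sx]]. exists (add A x). split.
      * apply in_options_add. right; eauto.
      * apply IH; auto. pose proof (game_size_option _ _ _ Hx). lia.
Qed.

Lemma shifted_num_add a B : shifted a B (add (num a) B).
Proof.
  induction B as [B IH] using (induction_ltof1 _ game_size).
  constructor.
  - intro b. rewrite options_add_nil, options_num. tauto.
  - intros b E. rewrite empty_score_add by (auto using options_num).
    destruct b; cbn; lra.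
  - intros b x Hx. exists (add (num a) x). split.
    + apply in_options_add; right; eauto.
    + apply IH, (game_size_option b), Hx.
  - intros b z Hz. apply in_options_add in Hz as [[x [Hx ->]]|[x [Hx ->]]].
    + rewrite options_num in Hx. destruct Hx.
    + exists x. split; auto. apply IH, (game_size_option b), Hx.
Qed.

Lemma shifted_add_num a B : shifted a B (add B (num a)).
Proof.
  induction B as [B IH] using (induction_ltof1 _ game_size).
  constructor.
  - intro b. rewrite options_add_nil, options_num. tauto.
  - intros b E. rewrite empty_score_add by (auto using options_num).
    destruct b; cbn; lra.
  - intros b x Hx. exists (add x (num a)). split.
    + apply in_options_add; left; eauto.
    + apply IH, (game_size_option b), Hx.
  - intros b z Hz. apply in_options_add in Hz as [[x [Hx ->]]|[x [Hx ->]]].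
    + exists x. split; auto. apply IH, (game_size_option b), Hx.
    + rewrite options_num in Hx. destruct Hx.
Qed.

Lemma Ls_add_num Y c : Ls (add Y (num c)) = Ls Y + c.
Proof. apply (shifted_scores _ _ _ (shifted_add_num c Y)). Qed.

Lemma Rs_add_num Y c : Rs (add Y (num c)) = Rs Y + c.
Proof. apply (shifted_scores _ _ _ (shifted_add_num c Y)). Qed.

Lemma Ls_num_add a B : Ls (add (num a) B) = Ls B + a.
Proof. apply (shifted_scores _ _ _ (shifted_num_add a B)). Qed.

Lemma Rs_num_add a B : Rs (add (num a) B) = Rs B + a.
Proof. apply (shifted_scores _ _ _ (shifted_num_add a B)). Qed.

Lemma shifted_swap X A Z : shifted 0 (add X (add A Z)) (add A (add X Z)).
Proof.
  revert Z. pattern X, A. revert X A. apply game_pair_ind. intros X A IH Z.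
  induction Z as [Z IHZ] using (induction_ltof1 _ game_size).
  constructor.
  - intro b. rewrite !options_add_nil. tauto.
  - intros b E. rewrite !options_add_nil in E. destruct E as [E1 [E2 E3]].
    rewrite !empty_score_add; auto; try (apply options_add_nil; auto). lra.
  - intros b z Hz. apply in_options_add in Hz as [[x' [Hx ->]]|[y [Hy ->]]].
    + exists (add A (add x' Z)). split.
      * apply in_options_add; right. exists (add x' Z); split; auto. apply in_options_add; left; eauto.
      * apply IH. pose proof (game_size_option _ _ _ Hx). lia.
    + apply in_options_add in Hy as [[a' [Ha ->]]|[z' [Hz ->]]].
      * exists (add a' (add X Z)). split.
        -- apply in_options_add; left; eauto.
        -- apply IH. pose proof (game_size_option _ _ _ Ha). lia.
      * exists (add A (add X z')). split.
        -- apply in_options_add; right. exists (add X z'); split; auto. apply in_options_add; right; eauto.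
        -- apply IHZ, (game_size_option b), Hz.
  - intros b z Hz. apply in_options_add in Hz as [[a' [Ha ->]]|[y [Hy ->]]].
    + exists (add X (add a' Z)). split.
      * apply in_options_add; right. exists (add a' Z); split; auto. apply in_options_add; left; eauto.
      * apply IH. pose proof (game_size_option _ _ _ Ha). lia.
    + apply in_options_add in Hy as [[x' [Hx ->]]|[z' [Hz ->]]].
      * exists (add x' (add A Z)). split.
        -- apply in_options_add; left; eauto.
        -- apply IH. pose proof (game_size_option _ _ _ Hx). lia.
      * exists (add X (add A z')). split.
        -- apply in_options_add; right. exists (add A z'); split; auto. apply in_options_add; right; eauto.
        -- apply IHZ, (game_size_option b), Hz.
Qed.

(** * Regular games and Milnor's inequalities *)

Definition regular_at (H : game) : Prop :=
  Rs H <= Ls H /\ (options true H = [] \/ options false H = [] -> is_number H = true).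

Definition regular (X : game) : Prop := forall H, position H X -> regular_at H.

Lemma position_trans k h g : position k h -> position h g -> position k g.
Proof. intros H1 H2. induction H2; eauto using position. Qed.

Lemma option_position b x X : In x (options b X) -> position x X.
Proof.
  intro Hx. apply (pos_step x x X); [| apply pos_refl].
  destruct b; [left | right]; exact Hx.
Qed.

Lemma regular_position X Y : regular X -> position Y X -> regular Y.
Proof. intros RX HY H HH. apply RX. eapply position_trans; eauto. Qed.

Lemma regular_option b x X : regular X -> In x (options b X) -> regular x.
Proof. intros RX Hx. eapply regular_position, option_position; eauto. Qed.

Lemma regular_Rs_le_Ls X : regular X -> Rs X <= Ls X.
Proof. intro RX. apply (RX X (pos_refl X)). Qed.

Lemma regular_nil_number b X : regular X -> options b X = [] -> is_number X = true.
Proof. intros RX E. apply (RX X (pos_refl X)). destruct b; auto. Qed.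

Lemma regular_nil_num b X : regular X -> options b X = [] -> X = num (Ls X).
Proof. intros RX E. apply number_eq_num, (regular_nil_number b); auto. Qed.

Lemma regular_num a : regular (num a).
Proof.
  intros H Hp. inversion Hp as [|k h g Ho]; subst; [| destruct Ho as [[]|[]]].
  split; [cbn; lra | intros _; apply is_number_num].
Qed.

Lemma regular_of_hypotheses G :
  dicotic G -> nonzugzwang G -> terminals_are_numbers G -> regular G.
Proof.
  intros Hdic Hnz Hterm H Hp. split; [apply Rge_le, Hnz, Hp|].
  specialize (Hdic H Hp). unfold has_options in Hdic.
  destruct H as [[a|h hs] [c|h' hs']]; unfold options; cbn in *; try tauto.
  - intros _. rewrite (Hterm _ a c Hp eq_refl). apply is_number_num.
  - exfalso. apply Hdic; [|reflexivity]; discriminate.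
  - exfalso. apply (proj1 Hdic); [discriminate | reflexivity].
  - intros [[=]|[=]].
Qed.

Lemma position_add H A B : position H (add A B) ->
  exists A' B', position A' A /\ position B' B /\ H = add A' B'.
Proof.
  intro Hp. remember (add A B) as g eqn:Eg. revert A B Eg.
  induction Hp as [g|k h g Ho Hp IH]; intros A B ->.
  - exists A, B. auto using pos_refl.
  - assert (Hh : exists b, In h (options b (add A B))) by (destruct Ho; [exists true|exists false]; auto).
    destruct Hh as [b Hh]. apply in_options_add in Hh as [[x [Hx ->]]|[y [Hy ->]]].
    + destruct (IH x B eq_refl) as [A' [B' [H1 [H2 ->]]]].
      exists A', B'. repeat split; auto. eapply position_trans, option_position; eauto.
    + destruct (IH A y eq_refl) as [A' [B' [H1 [H2 ->]]]].
      exists A', B'. repeat split; auto. eapply position_trans, option_position; eauto.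
Qed.

Record milnor_bounds (A B : game) : Prop := {
  Ls_add_le : Ls (add A B) <= Ls A + Ls B;
  Rs_add_ge : Rs A + Rs B <= Rs (add A B);
  Rs_add_le_Rs_Ls : Rs (add A B) <= Rs A + Ls B;
  Rs_add_le_Ls_Rs : Rs (add A B) <= Ls A + Rs B;
  Ls_add_ge_Rs_Ls : Rs A + Ls B <= Ls (add A B);
  Ls_add_ge_Ls_Rs : Ls A + Rs B <= Ls (add A B) }.

Lemma milnor A B : regular A -> regular B -> milnor_bounds A B.
Proof.
  pattern A, B. revert A B. apply game_pair_ind. intros A B IH RA RB.
  assert (IHA : forall b x, In x (options b A) -> milnor_bounds x B).
  { intros b x Hx. pose proof (game_size_option _ _ _ Hx).
    apply (IH x B); [lia | exact (regular_option _ _ _ RA Hx) | exact RB]. }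
  assert (IHB : forall b y, In y (options b B) -> milnor_bounds A y).
  { intros b y Hy. pose proof (game_size_option _ _ _ Hy).
    apply (IH A y); [lia | exact RA | exact (regular_option _ _ _ RB Hy)]. }
  pose proof (regular_Rs_le_Ls A RA). pose proof (regular_Rs_le_Ls B RB).
  constructor.
  - destruct (nil_or_not (options true (add A B))) as [E|E].
    + apply options_add_nil in E as [EA EB].
      rewrite (regular_nil_num true A RA EA), Ls_num_add. cbn. lra.
    + apply Ls_le_bound; auto. intros z Hz. apply in_options_add in Hz as [[x [Hx ->]]|[y [Hy ->]]].
      * pose proof (Rs_add_le_Rs_Ls _ _ (IHA _ _ Hx)). pose proof (Ls_ge_option A x Hx). lra.
      * pose proof (Rs_add_le_Ls_Rs _ _ (IHB _ _ Hy)). pose proof (Ls_ge_option B y Hy). lra.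
  - destruct (nil_or_not (options false (add A B))) as [E|E].
    + apply options_add_nil in E as [EA EB].
      rewrite (regular_nil_num false A RA EA), Rs_num_add. cbn. lra.
    + apply Rs_ge_bound; auto. intros z Hz. apply in_options_add in Hz as [[x [Hx ->]]|[y [Hy ->]]].
      * pose proof (Ls_add_ge_Ls_Rs _ _ (IHA _ _ Hx)). pose proof (Rs_le_option A x Hx). lra.
      * pose proof (Ls_add_ge_Rs_Ls _ _ (IHB _ _ Hy)). pose proof (Rs_le_option B y Hy). lra.
  - destruct (nil_or_not (options false A)) as [E|E].
    + rewrite (regular_nil_num false A RA E), Rs_num_add. cbn. lra.
    + destruct (Rs_attained A E) as [x [Hx ->]].
      pose proof (Rs_le_option (add A B) (add x B) ltac:(apply in_options_add; left; eauto)).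
      pose proof (Ls_add_le _ _ (IHA _ _ Hx)). lra.
  - destruct (nil_or_not (options false B)) as [E|E].
    + rewrite (regular_nil_num false B RB E), Rs_add_num. cbn. lra.
    + destruct (Rs_attained B E) as [y [Hy ->]].
      pose proof (Rs_le_option (add A B) (add A y) ltac:(apply in_options_add; right; eauto)).
      pose proof (Ls_add_le _ _ (IHB _ _ Hy)). lra.
  - destruct (nil_or_not (options true B)) as [E|E].
    + rewrite (regular_nil_num true B RB E), Ls_add_num. cbn. lra.
    + destruct (Ls_attained B E) as [y [Hy ->]].
      pose proof (Ls_ge_option (add A B) (add A y) ltac:(apply in_options_add; right; eauto)).
      pose proof (Rs_add_ge _ _ (IHB _ _ Hy)). lra.
  - destruct (nil_or_not (options true A)) as [E|E].
    + rewrite (regular_nil_num true A RA E), Ls_num_add. cbn. lra.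
    + destruct (Ls_attained A E) as [x [Hx ->]].
      pose proof (Ls_ge_option (add A B) (add x B) ltac:(apply in_options_add; left; eauto)).
      pose proof (Rs_add_ge _ _ (IHA _ _ Hx)). lra.
Qed.

Lemma regular_add A B : regular A -> regular B -> regular (add A B).
Proof.
  intros RA RB H Hp. destruct (position_add _ _ _ Hp) as [A' [B' [HA [HB ->]]]].
  pose proof (regular_position _ _ RA HA) as RA'. pose proof (regular_position _ _ RB HB) as RB'.
  pose proof (milnor A' B' RA' RB') as M. split.
  - pose proof (Rs_add_le_Rs_Ls _ _ M). pose proof (Ls_add_ge_Rs_Ls _ _ M). lra.
  - assert (Hnum : forall b, options b (add A' B') = [] -> is_number (add A' B') = true).
    { intros b E. apply options_add_nil in E as [EA EB].
      rewrite (regular_nil_num b A' RA' EA), (regular_nil_num b B' RB' EB).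
      exact (is_number_num (Ls A' + Ls B')). }
    intros [E|E]; eapply Hnum; eauto.
Qed.

(** * Cooling *)

(* The first crossing is the supremum of {t >= 0 | Rf t < Lf t}. *)
Lemma first_crossing (Lf Rf : R -> R) :
  (forall s t, 0 <= s <= t -> Lf t <= Lf s <= Lf t + (t - s)) ->
  (forall s t, 0 <= s <= t -> Rf s <= Rf t <= Rf s + (t - s)) ->
  Rf 0 <= Lf 0 -> (exists T, 0 <= T /\ Lf T < Rf T) ->
  exists t0, 0 <= t0 /\ Lf t0 = Rf t0 /\ forall t, 0 <= t -> Lf t = Rf t -> t0 <= t.
Proof.
  intros HL HR H0 [T [HT0 HT]].
  destruct (Req_dec (Lf 0) (Rf 0)) as [E0|E0].
  { exists 0. split; [lra | split; auto]. }
  set (E := fun t => 0 <= t /\ Rf t < Lf t).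
  assert (HEb : forall t, E t -> t <= T).
  { intros t [Ht Hf]. destruct (Rle_dec t T) as [|Hn]; auto.
    specialize (HL T t ltac:(lra)). specialize (HR T t ltac:(lra)). lra. }
  destruct (completeness E) as [a [Hub Hlub]].
  { exists T. intros t Ht. apply HEb; auto. }
  { exists 0. split; lra. }
  assert (Ha0 : 0 <= a) by (apply Hub; split; lra).
  assert (Happrox : forall b, b < a -> exists t, E t /\ b < t).
  { intros b Hb. apply NNPP. intro Hn. enough (a <= b) by lra.
    apply Hlub. intros t Ht. destruct (Rle_dec t b); auto. exfalso; apply Hn; exists t; split; auto; lra. }
  exists a. split; auto. split.
  - destruct (Rtotal_order (Lf a) (Rf a)) as [Hlt|[Heq|Hgt]]; auto; exfalso.
    + set (e := (Rf a - Lf a) / 4).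
      destruct (Happrox (a - e) ltac:(unfold e; lra)) as [t [[Ht0 Ht] Hgt]].
      assert (t <= a) by (apply Hub; split; auto).
      specialize (HL t a ltac:(lra)). specialize (HR t a ltac:(lra)). unfold e in *. lra.
    + set (e := (Lf a - Rf a) / 4).
      assert (E (a + e)).
      { split; [unfold e; lra|]. specialize (HL a (a + e) ltac:(unfold e; lra)).
        specialize (HR a (a + e) ltac:(unfold e; lra)). unfold e in *. lra. }
      assert (a + e <= a) by (apply Hub; auto). unfold e in *; lra.
  - intros t Ht Hf. destruct (Rle_dec a t) as [|Hn]; auto. exfalso.
    destruct (Happrox t ltac:(lra)) as [u [[Hu0 Hu] Htu]].
    specialize (HL t u ltac:(lra)). specialize (HR t u ltac:(lra)). lra.
Qed.

Definition cooling_shift (b : bool) (s : R) : R := if b then - s else s.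

Lemma options_cool_tilde b X s :
  options b (cool_tilde X s) = map (fun x => add (cool x s) (num (cooling_shift b s))) (options b X).
Proof. destruct X as [[a|h hs] [c|h' hs']], b; reflexivity. Qed.

Lemma options_cool_tilde_nil b X s : options b (cool_tilde X s) = [] <-> options b X = [].
Proof. rewrite options_cool_tilde. split; [apply map_eq_nil | intros ->; reflexivity]. Qed.

Lemma cool_unfold X t : cool X t =
  if is_number X then X
  else if Rle_dec t (temperature X) then cool_tilde X t
  else num (Ls (cool_tilde X (temperature X))).
Proof. destruct X as [l r]. unfold temperature. cbn - [is_number]. destruct (is_number _); reflexivity. Qed.

Lemma cool_number X t : is_number X = true -> cool X t = X.
Proof. intro HN. rewrite cool_unfold, HN. reflexivity. Qed.

Lemma cool_hot X t : is_number X = false -> t <= temperature X -> cool X t = cool_tilde X t.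
Proof.
  intros HN Ht. rewrite cool_unfold, HN. destruct (Rle_dec t (temperature X)); [reflexivity | lra].
Qed.

Lemma temperature_number X : is_number X = true -> temperature X = 0.
Proof. unfold temperature. intros ->. reflexivity. Qed.

Lemma Ls_cool_tilde_ge X x t : In x (options true X) -> Rs (cool x t) - t <= Ls (cool_tilde X t).
Proof.
  intro Hx. assert (Hy : In (add (cool x t) (num (- t))) (options true (cool_tilde X t))).
  { rewrite options_cool_tilde. apply in_map_iff. eauto. }
  pose proof (Ls_ge_option _ _ Hy). rewrite Rs_add_num in H. lra.
Qed.

Lemma Rs_cool_tilde_le X x t : In x (options false X) -> Rs (cool_tilde X t) <= Ls (cool x t) + t.
Proof.
  intro Hx. assert (Hy : In (add (cool x t) (num t)) (options false (cool_tilde X t))).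
  { rewrite options_cool_tilde. apply in_map_iff. eauto. }
  pose proof (Rs_le_option _ _ Hy). rewrite Ls_add_num in H. lra.
Qed.

Lemma Ls_cool_tilde_attained X t : options true X <> [] ->
  exists x, In x (options true X) /\ Ls (cool_tilde X t) = Rs (cool x t) - t.
Proof.
  intro HL. assert (Hne : options true (cool_tilde X t) <> []) by (rewrite options_cool_tilde_nil; exact HL).
  destruct (Ls_attained _ Hne) as [y [Hy ->]]. rewrite options_cool_tilde in Hy.
  apply in_map_iff in Hy as [x [<- Hx]]. exists x. split; auto. rewrite Rs_add_num. cbn. lra.
Qed.

Lemma Rs_cool_tilde_attained X t : options false X <> [] ->
  exists x, In x (options false X) /\ Rs (cool_tilde X t) = Ls (cool x t) + t.
Proof.
  intro HR. assert (Hne : options false (cool_tilde X t) <> []) by (rewrite options_cool_tilde_nil; exact HR).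
  destruct (Rs_attained _ Hne) as [y [Hy ->]]. rewrite options_cool_tilde in Hy.
  apply in_map_iff in Hy as [x [<- Hx]]. exists x. split; auto. rewrite Ls_add_num. reflexivity.
Qed.

Definition cooling_monotone (F : R -> game) : Prop :=
  forall s t, 0 <= s <= t ->
    (Ls (F t) <= Ls (F s) <= Ls (F t) + (t - s)) /\ (Rs (F s) <= Rs (F t) <= Rs (F s) + (t - s)).

Definition is_temperature (X : game) (t0 : R) : Prop :=
  0 <= t0 /\ Ls (cool_tilde X t0) = Rs (cool_tilde X t0) /\
  forall t, 0 <= t -> Ls (cool_tilde X t) = Rs (cool_tilde X t) -> t0 <= t.

Lemma temperature_is_temperature X : is_number X = false ->
  (exists t0, is_temperature X t0) -> is_temperature X (temperature X).
Proof. intros HN Hex. unfold temperature. rewrite HN. exact (epsilon_spec _ _ Hex). Qed.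

Definition value (X : game) : R := Ls (cool X (temperature X)).

Record cooling_spec (X : game) : Prop := {
  cool_monotone : cooling_monotone (cool X);
  cool_nonzugzwang : forall t, 0 <= t -> Rs (cool X t) <= Ls (cool X t);
  Ls_cool_0 : Ls (cool X 0) = Ls X;
  Rs_cool_0 : Rs (cool X 0) = Rs X;
  value_between : forall t, 0 <= t -> Rs (cool X t) <= value X <= Ls (cool X t);
  temperature_spec : is_number X = false -> is_temperature X (temperature X) }.

Lemma Rabs_bounded_on_list {A} (f : A -> R) (l : list A) :
  exists M, forall x, In x l -> Rabs (f x) <= M.
Proof.
  induction l as [|y l [M HM]]; [exists 0; intros _ []|].
  exists (Rmax (Rabs (f y)) M). intros x [<-|Hx]; [apply Rmax_l|].
  eapply Rle_trans; [apply HM, Hx | apply Rmax_r].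
Qed.

Section CoolTilde.

Variable X : game.
Hypothesis HL : options true X <> [].
Hypothesis HR : options false X <> [].
Hypothesis IHo : forall b x, In x (options b X) -> cooling_spec x.

Lemma cool_tilde_monotone : cooling_monotone (cool_tilde X).
Proof.
  intros s t Hst. split; split.
  - destruct (Ls_cool_tilde_attained X t HL) as [x [Hx ->]].
    destruct (cool_monotone _ (IHo _ _ Hx) s t Hst) as [_ [h1 h2]].
    pose proof (Ls_cool_tilde_ge X x s Hx). lra.
  - destruct (Ls_cool_tilde_attained X s HL) as [x [Hx ->]].
    destruct (cool_monotone _ (IHo _ _ Hx) s t Hst) as [_ [h1 h2]].
    pose proof (Ls_cool_tilde_ge X x t Hx). lra.
  - destruct (Rs_cool_tilde_attained X t HR) as [x [Hx ->]].
    destruct (cool_monotone _ (IHo _ _ Hx) s t Hst) as [[h1 h2] _].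
    pose proof (Rs_cool_tilde_le X x s Hx). lra.
  - destruct (Rs_cool_tilde_attained X s HR) as [x [Hx ->]].
    destruct (cool_monotone _ (IHo _ _ Hx) s t Hst) as [[h1 h2] _].
    pose proof (Rs_cool_tilde_le X x t Hx). lra.
Qed.

Lemma scores_cool_tilde_0 : Ls (cool_tilde X 0) = Ls X /\ Rs (cool_tilde X 0) = Rs X.
Proof.
  split; apply Rle_antisym.
  - destruct (Ls_cool_tilde_attained X 0 HL) as [x [Hx ->]].
    rewrite (Rs_cool_0 _ (IHo _ _ Hx)). pose proof (Ls_ge_option _ _ Hx). lra.
  - destruct (Ls_attained X HL) as [x [Hx ->]].
    pose proof (Ls_cool_tilde_ge X x 0 Hx). rewrite (Rs_cool_0 _ (IHo _ _ Hx)) in H. lra.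
  - destruct (Rs_attained X HR) as [x [Hx ->]].
    pose proof (Rs_cool_tilde_le X x 0 Hx). rewrite (Ls_cool_0 _ (IHo _ _ Hx)) in H. lra.
  - destruct (Rs_cool_tilde_attained X 0 HR) as [x [Hx ->]].
    rewrite (Ls_cool_0 _ (IHo _ _ Hx)). pose proof (Rs_le_option _ _ Hx). lra.
Qed.

Lemma cool_tilde_eventually_crossed : exists T, 0 <= T /\ Ls (cool_tilde X T) < Rs (cool_tilde X T).
Proof.
  destruct (Rabs_bounded_on_list value (options true X ++ options false X)) as [M HM].
  assert (M0 : 0 <= M).
  { destruct (options true X) as [|x l] eqn:E; [contradiction|].
    eapply Rle_trans; [apply Rabs_pos | apply (HM x); left; reflexivity]. }
  exists (M + 1). split; [lra|].
  destruct (Ls_cool_tilde_attained X (M + 1) HL) as [x [Hx ->]].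
  destruct (Rs_cool_tilde_attained X (M + 1) HR) as [y [Hy ->]].
  pose proof (value_between _ (IHo _ _ Hx) (M + 1) ltac:(lra)).
  pose proof (value_between _ (IHo _ _ Hy) (M + 1) ltac:(lra)).
  pose proof (HM x ltac:(apply in_or_app; auto)). pose proof (HM y ltac:(apply in_or_app; auto)).
  pose proof (Rle_abs (value x)). pose proof (Rle_abs (- value y)).
  rewrite Rabs_Ropp in *. lra.
Qed.

End CoolTilde.

Lemma regular_not_number_options b X : regular X -> is_number X = false -> options b X <> [].
Proof. intros RX HN E. rewrite (regular_nil_number b X RX E) in HN. discriminate. Qed.

Lemma regular_cooling_spec X : regular X -> cooling_spec X.
Proof.
  induction X as [X IH] using (induction_ltof1 _ game_size). intro RX.
  destruct (is_number X) eqn:HN.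
  - assert (E : forall t, cool X t = X) by (intro; apply cool_number, HN).
    assert (EV : value X = Ls X) by (unfold value; rewrite E; reflexivity).
    pose proof (regular_Rs_le_Ls X RX).
    constructor; try (intros; rewrite ?E, ?EV; lra); [| congruence].
    intros s t Hst. rewrite !E. lra.
  - pose proof (regular_not_number_options true X RX HN) as HL.
    pose proof (regular_not_number_options false X RX HN) as HR.
    assert (IHo : forall b x, In x (options b X) -> cooling_spec x)
      by (intros b x Hx; apply IH; [apply (game_size_option b), Hx | eapply regular_option; eauto]).
    pose proof (cool_tilde_monotone X HL HR IHo) as TM.
    destruct (scores_cool_tilde_0 X HL HR IHo) as [Z1 Z2].
    assert (TS : is_temperature X (temperature X)).
    { apply temperature_is_temperature; auto.
      apply (first_crossing (fun t => Ls (cool_tilde X t)) (fun t => Rs (cool_tilde X t)));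
        [apply TM | apply TM | rewrite Z1, Z2; apply regular_Rs_le_Ls, RX |
         apply cool_tilde_eventually_crossed; auto]. }
    destruct TS as [T0 [T1 T2]].
    set (t0 := temperature X) in *.
    assert (EV : value X = Ls (cool_tilde X t0)) by (unfold value; rewrite cool_hot; auto; lra).
    set (v := Ls (cool_tilde X t0)) in *.
    assert (E : forall t, cool X t = if Rle_dec t t0 then cool_tilde X t else num v)
      by (intro t; rewrite cool_unfold, HN; reflexivity).
    assert (Hbetween : forall t, 0 <= t <= t0 -> Rs (cool_tilde X t) <= v <= Ls (cool_tilde X t)).
    { intros t Ht. destruct (TM t t0 Ht) as [[a1 a2] [b1 b2]]. unfold v in *. lra. }
    constructor; rewrite ?EV.
    + intros s t Hst. rewrite !E.
      destruct (Rle_dec t t0), (Rle_dec s t0); try lra.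
      * apply TM; auto.
      * cbn. destruct (TM s t0 ltac:(lra)) as [[a1 a2] [b1 b2]]. unfold v in *. lra.
    + intros t Ht. rewrite E. destruct (Rle_dec t t0); [destruct (Hbetween t) | cbn]; lra.
    + rewrite E. destruct (Rle_dec 0 t0); [auto | lra].
    + rewrite E. destruct (Rle_dec 0 t0); [auto | lra].
    + intros t Ht. rewrite E. destruct (Rle_dec t t0); [apply Hbetween | cbn]; lra.
    + intros _. repeat split; auto.
Qed.

Lemma temperature_nonneg X : regular X -> 0 <= temperature X.
Proof.
  intro RX. destruct (is_number X) eqn:HN.
  - rewrite temperature_number by exact HN. lra.
  - apply (temperature_spec _ (regular_cooling_spec X RX) HN).
Qed.

Lemma cool_frozen X t : is_number X = false -> temperature X < t -> cool X t = num (value X).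
Proof.
  intros HN Ht. unfold value. rewrite (cool_unfold X t), HN, (cool_hot X _ HN (Rle_refl _)).
  destruct (Rle_dec t (temperature X)); [lra | reflexivity].
Qed.

Lemma scores_cool_after X t : regular X -> temperature X <= t ->
  Ls (cool X t) = value X /\ Rs (cool X t) = value X.
Proof.
  intros RX Ht. destruct (is_number X) eqn:HN.
  - unfold value. rewrite !cool_number by exact HN.
    rewrite (number_eq_num X HN). split; reflexivity.
  - destruct (Rle_lt_dec t (temperature X)) as [Hle|Hlt].
    + replace t with (temperature X) by lra. unfold value. split; [reflexivity|].
      rewrite cool_hot by (auto; lra).
      destruct (temperature_spec _ (regular_cooling_spec X RX) HN) as [_ [E _]]. congruence.
    + rewrite cool_frozen by auto. split; reflexivity.
Qed.

Lemma options_cool b Y t y : In y (options b (cool Y t)) ->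
  exists x, In x (options b Y) /\ is_number Y = false /\ t <= temperature Y /\
    y = add (cool x t) (num (cooling_shift b t)).
Proof.
  intro Hy. destruct (is_number Y) eqn:HN.
  - rewrite cool_number, number_options in Hy by exact HN. destruct Hy.
  - destruct (Rle_lt_dec t (temperature Y)) as [Ht|Ht].
    + rewrite cool_hot, options_cool_tilde in Hy by auto.
      apply in_map_iff in Hy as [x [<- Hx]]. exists x. auto.
    + rewrite cool_frozen, options_num in Hy by auto. destruct Hy.
Qed.

Lemma frozen_option_bounds X t : regular X -> is_number X = false -> temperature X < t ->
  (forall x, In x (options true X) -> Rs (cool x t) - t <= value X) /\
  (forall x, In x (options false X) -> value X <= Ls (cool x t) + t).
Proof.
  intros RX HN Ht.
  pose proof (regular_not_number_options true X RX HN) as HL.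
  pose proof (regular_not_number_options false X RX HN) as HR.
  assert (IHo : forall b x, In x (options b X) -> cooling_spec x)
    by (intros b x Hx; apply regular_cooling_spec; eapply regular_option; eauto).
  pose proof (temperature_nonneg X RX).
  destruct (cool_tilde_monotone X HL HR IHo (temperature X) t ltac:(lra)) as [[a1 a2] [b1 b2]].
  destruct (temperature_spec _ (regular_cooling_spec X RX) HN) as [_ [T1 _]].
  unfold value. rewrite (cool_hot X (temperature X) HN (Rle_refl _)).
  split; intros x Hx.
  - pose proof (Ls_cool_tilde_ge X x t Hx). lra.
  - pose proof (Rs_cool_tilde_le X x t Hx). lra.
Qed.

Lemma regular_at_shifted c A B : shifted c A B -> regular_at A -> regular_at B.
Proof.
  intros HS [H1 H2]. destruct (shifted_scores _ _ _ HS) as [E1 E2].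
  destruct HS as [Hnil Hdec _ _]. split; [lra|].
  intro E. assert (EA : options true A = [] \/ options false A = [])
    by (rewrite (Hnil true), (Hnil false); exact E).
  specialize (H2 EA). pose proof (number_options true A H2) as EL. pose proof (number_options false A H2) as ER.
  apply is_number_of_nil; [apply Hnil, EL | apply Hnil, ER |].
  rewrite (Hdec true EL), (Hdec false ER), (number_eq_num A H2). reflexivity.
Qed.

Lemma regular_at_cool Y t : regular Y -> 0 <= t -> regular_at (cool Y t).
Proof.
  intros RY Ht. split; [apply (cool_nonzugzwang _ (regular_cooling_spec Y RY)), Ht|].
  destruct (is_number Y) eqn:HN.
  - rewrite cool_number by exact HN. intros _. exact HN.
  - destruct (Rle_lt_dec t (temperature Y)).
    + rewrite cool_hot, !options_cool_tilde_nil by auto.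
      intros [E|E]; exfalso; eapply regular_not_number_options; eauto.
    + rewrite cool_frozen by auto. intros _. apply is_number_num.
Qed.

Lemma position_cool X t H : position H (cool X t) ->
  exists Y c, position Y X /\ shifted c (cool Y t) H.
Proof.
  enough (Hgen : forall g, position H g -> forall Y c, position Y X -> shifted c (cool Y t) g ->
            exists Y' c', position Y' X /\ shifted c' (cool Y' t) H).
  { intro Hp. apply (Hgen _ Hp X 0); [apply pos_refl | apply shifted_refl]. }
  intros g Hp. induction Hp as [g|k h g Ho Hp IHp]; [eauto|].
  intros Y c HY HS.
  assert (Hh : exists b, In h (options b g)) by (destruct Ho; [exists true|exists false]; auto).
  destruct Hh as [b Hh]. destruct HS as [_ _ _ Hbwd].
  destruct (Hbwd b h Hh) as [y [Hy Sy]].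
  destruct (options_cool b Y t y Hy) as [x [Hx [_ [_ ->]]]].
  apply (IHp x (cooling_shift b t + c)).
  - eapply position_trans; [eapply option_position; eauto | exact HY].
  - eapply shifted_trans; [apply shifted_add_num | exact Sy].
Qed.

Lemma regular_cool X t : regular X -> 0 <= t -> regular (cool X t).
Proof.
  intros RX Ht H Hp. destruct (position_cool X t H Hp) as [Y [c [HY HS]]].
  eapply regular_at_shifted; [exact HS|]. apply regular_at_cool; auto.
  eapply regular_position; eauto.
Qed.

(** * Cooling sums of positions *)

Definition sum_list (l : list game) : game := fold_right add (num 0) l.

Definition cooled (t : R) (l : list game) : list game := map (fun X => cool X t) l.

Definition sum_value (l : list game) : R := fold_right (fun X acc => value X + acc) 0 l.

Lemma in_options_sum_list b l z : In z (options b (sum_list l)) <->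
  exists pre X post x, l = pre ++ X :: post /\ In x (options b X) /\ z = sum_list (pre ++ x :: post).
Proof.
  split.
  - revert z. induction l as [|Y l IH]; intros z Hz; cbn in Hz.
    + rewrite options_num in Hz. destruct Hz.
    + apply in_options_add in Hz as [[x [Hx ->]]|[y [Hy ->]]].
      * exists [], Y, l, x. auto.
      * destruct (IH y Hy) as [pre [X [post [x [-> [Hx ->]]]]]].
        exists (Y :: pre), X, post, x. auto.
  - intros [pre [X [post [x [-> [Hx ->]]]]]]. induction pre as [|Y pre IH]; cbn.
    + apply in_options_add. left. eauto.
    + apply in_options_add. right. eauto.
Qed.

Lemma sum_list_options_nil b l : options b (sum_list l) = [] <-> forall X, In X l -> options b X = [].
Proof.
  induction l as [|Y l IH]; cbn.
  - rewrite options_num. split; [intros _ _ [] | reflexivity].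
  - rewrite options_add_nil, IH. split.
    + intros [H1 H2] X [<-|HX]; auto.
    + auto.
Qed.

Lemma shifted_sum_list_component c A A' pre post : shifted c A A' ->
  shifted c (sum_list (pre ++ A :: post)) (sum_list (pre ++ A' :: post)).
Proof.
  intro HA. induction pre as [|Y pre IH]; cbn.
  - replace c with (c + 0) by lra. apply shifted_add; [exact HA | apply shifted_refl].
  - replace c with (0 + c) by lra. apply shifted_add; [apply shifted_refl | exact IH].
Qed.

Lemma shifted_sum_list_extract A pre post :
  shifted 0 (sum_list (pre ++ A :: post)) (add A (sum_list (pre ++ post))).
Proof.
  induction pre as [|Y pre IH]; cbn; [apply shifted_refl|].
  pose proof (shifted_add _ _ _ _ _ _ (shifted_refl Y) IH) as H1. rewrite Rplus_0_r in H1.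
  pose proof (shifted_trans _ _ _ _ _ H1 (shifted_swap Y A (sum_list (pre ++ post)))) as H2.
  rewrite Rplus_0_r in H2. exact H2.
Qed.

Lemma scores_sum_list_add_num A c pre post :
  Ls (sum_list (pre ++ add A (num c) :: post)) = Ls (sum_list (pre ++ A :: post)) + c /\
  Rs (sum_list (pre ++ add A (num c) :: post)) = Rs (sum_list (pre ++ A :: post)) + c.
Proof. apply shifted_scores, shifted_sum_list_component, shifted_add_num. Qed.

Lemma scores_sum_list_num a pre post :
  Ls (sum_list (pre ++ num a :: post)) = Ls (sum_list (pre ++ post)) + a /\
  Rs (sum_list (pre ++ num a :: post)) = Rs (sum_list (pre ++ post)) + a.
Proof.
  destruct (shifted_scores _ _ _ (shifted_sum_list_extract (num a) pre post)) as [E1 E2].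
  rewrite Ls_num_add in E1. rewrite Rs_num_add in E2. lra.
Qed.

Lemma regular_sum_list l : (forall X, In X l -> regular X) -> regular (sum_list l).
Proof.
  induction l as [|X l IH]; cbn; intro H; [apply regular_num|].
  apply regular_add; auto.
Qed.

Lemma sum_list_component_bounds A pre post :
  regular A -> (forall X, In X (pre ++ post) -> regular X) ->
  Rs (sum_list (pre ++ A :: post)) <= Rs A + Ls (sum_list (pre ++ post)) /\
  Ls A + Rs (sum_list (pre ++ post)) <= Ls (sum_list (pre ++ A :: post)).
Proof.
  intros RA Rrest. pose proof (milnor _ _ RA (regular_sum_list _ Rrest)) as M.
  destruct (shifted_scores _ _ _ (shifted_sum_list_extract A pre post)) as [E1 E2].
  pose proof (Rs_add_le_Rs_Ls _ _ M). pose proof (Ls_add_ge_Ls_Rs _ _ M). lra.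
Qed.

Lemma scores_sum_cooled_after t l : 0 <= t ->
  (forall X, In X l -> regular X /\ temperature X <= t) ->
  Ls (sum_list (cooled t l)) = sum_value l /\ Rs (sum_list (cooled t l)) = sum_value l.
Proof.
  intros Ht H. induction l as [|X l IH]; [split; reflexivity|].
  change (sum_list (cooled t (X :: l))) with (add (cool X t) (sum_list (cooled t l))).
  change (sum_value (X :: l)) with (value X + sum_value l).
  destruct (H X (or_introl eq_refl)) as [RX TX].
  destruct IH as [IH1 IH2]; [intros; apply H; right; assumption|].
  destruct (scores_cool_after X t RX TX) as [E1 E2].
  assert (Rrest : regular (sum_list (cooled t l))).
  { apply regular_sum_list. intros Y HY. unfold cooled in HY. apply in_map_iff in HY as [Z [<- HZ]].
    apply regular_cool; [apply H; right |]; assumption. }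
  destruct (milnor _ _ (regular_cool X t RX Ht) Rrest) as [m1 m2 m3 m4 m5 m6].
  split; lra.
Qed.

Lemma cooled_numbers t l : (forall X, In X l -> is_number X = true) -> cooled t l = l.
Proof.
  intro H. induction l as [|X l IH]; cbn; [reflexivity|].
  rewrite cool_number by (apply H; left; reflexivity). f_equal. apply IH. intros; apply H; right; assumption.
Qed.

Definition cooling_band (t : R) (l : list game) : Prop :=
  Ls (sum_list (cooled t l)) <= Ls (sum_list l) <= Ls (sum_list (cooled t l)) + t /\
  Rs (sum_list (cooled t l)) - t <= Rs (sum_list l) <= Rs (sum_list (cooled t l)).

Lemma exists_max_on_list {A} (f : A -> R) (P : A -> Prop) l : (exists x, In x l /\ P x) ->
  exists w, In w l /\ P w /\ forall x, In x l -> P x -> f x <= f w.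
Proof.
  induction l as [|y l IH]; intros [x [Hx Px]]; [destruct Hx|].
  destruct (classic (exists x, In x l /\ P x)) as [Hex|Hno].
  - destruct (IH Hex) as [w [Hw [Pw Hmax]]].
    destruct (classic (P y /\ f w <= f y)) as [[Py Hy]|Hy].
    + exists y. split; [left; reflexivity|]. split; [exact Py|].
      intros z [<-|Hz] Pz; [lra|]. specialize (Hmax z Hz Pz). lra.
    + exists w. split; [right; exact Hw|]. split; [exact Pw|].
      intros z [<-|Hz] Pz; [|auto]. apply Rnot_lt_le. intro. apply Hy. split; [exact Pz | lra].
  - destruct Hx as [->|Hx]; [| exfalso; eauto].
    exists x. split; [left; reflexivity|]. split; [exact Px|].
    intros z [<-|Hz] Pz; [lra | exfalso; eauto].
Qed.

Lemma sum_value_bounds l : (forall X, In X l -> regular X) ->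
  (forall X, In X l -> is_number X = false -> cooling_band (temperature X) l) ->
  sum_value l <= Ls (sum_list l) /\ Rs (sum_list l) <= sum_value l.
Proof.
  intros Rl Hband.
  destruct (classic (exists X, In X l /\ is_number X = false)) as [Hex|Hno].
  - destruct (exists_max_on_list temperature _ l Hex) as [W [HW [HNW Hmax]]].
    pose proof (temperature_nonneg W (Rl W HW)) as TW.
    assert (Hle : forall X, In X l -> regular X /\ temperature X <= temperature W).
    { intros X HX. split; [auto|]. destruct (is_number X) eqn:HN; [|auto].
      rewrite temperature_number by exact HN. exact TW. }
    destruct (scores_sum_cooled_after _ l TW Hle) as [E1 E2].
    destruct (Hband W HW HNW) as [[b1 _] [_ b2]]. lra.
  - assert (Hnum : forall X, In X l -> is_number X = true).
    { intros X HX. destruct (is_number X) eqn:E; [reflexivity | exfalso; eauto]. }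
    destruct (scores_sum_cooled_after 0 l (Rle_refl 0)) as [E1 E2].
    { intros X HX. split; [auto|]. rewrite temperature_number by auto. lra. }
    rewrite cooled_numbers in E1, E2 by exact Hnum. lra.
Qed.

Lemma cooled_app_cons t pre X post :
  cooled t (pre ++ X :: post) = cooled t pre ++ cool X t :: cooled t post.
Proof. unfold cooled. rewrite map_app. reflexivity. Qed.

Lemma options_sum_cooled b t l z : In z (options b (sum_list (cooled t l))) ->
  exists pre X post x, l = pre ++ X :: post /\ In x (options b X) /\
    is_number X = false /\ t <= temperature X /\
    z = sum_list (cooled t pre ++ add (cool x t) (num (cooling_shift b t)) :: cooled t post).
Proof.
  intro Hz. apply in_options_sum_list in Hz as [pre' [Y [post' [y [El [Hy ->]]]]]].
  apply map_eq_app in El as [pre [l2 [-> [<- E2]]]].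
  apply map_eq_cons in E2 as [X [post [-> [<- <-]]]].
  destruct (options_cool b X t y Hy) as [x [Hx [HN [Ht ->]]]].
  exists pre, X, post, x. auto.
Qed.

Lemma hot_option_in_sum_cooled b t pre X post x :
  In x (options b X) -> is_number X = false -> t <= temperature X ->
  In (sum_list (cooled t pre ++ add (cool x t) (num (cooling_shift b t)) :: cooled t post))
     (options b (sum_list (cooled t (pre ++ X :: post)))).
Proof.
  intros Hx HN Ht. apply in_options_sum_list.
  exists (cooled t pre), (cool X t), (cooled t post), (add (cool x t) (num (cooling_shift b t))).
  rewrite cooled_app_cons, (cool_hot X t HN Ht), options_cool_tilde.
  split; [reflexivity | split; [apply in_map_iff; eauto | reflexivity]].
Qed.

Section BandStep.

Variables (t : R) (l : list game).
Hypothesis t_ge0 : 0 <= t.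
Hypothesis regular_components : forall X, In X l -> regular X.
Hypothesis band_options : forall pre X post x b,
  l = pre ++ X :: post -> In x (options b X) -> cooling_band t (pre ++ x :: post).
Hypothesis frozen_bounds : (forall X, In X l -> is_number X = true \/ temperature X < t) ->
  sum_value l <= Ls (sum_list l) /\ Rs (sum_list l) <= sum_value l.

Lemma cooled_sum_no_options b : options b (sum_list (cooled t l)) = [] ->
  Ls (sum_list (cooled t l)) = sum_value l /\ Rs (sum_list (cooled t l)) = sum_value l /\
  sum_value l <= Ls (sum_list l) /\ Rs (sum_list l) <= sum_value l.
Proof.
  intro E. rewrite sum_list_options_nil in E.
  assert (Hcold : forall X, In X l -> is_number X = true \/ temperature X < t).
  { intros X HX. destruct (is_number X) eqn:HN; [left; reflexivity | right].
    apply Rnot_le_lt. intro Ht.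
    apply (regular_not_number_options b X (regular_components X HX) HN).
    rewrite <- (options_cool_tilde_nil b X t), <- (cool_hot X t HN Ht).
    apply E, in_map_iff. eauto. }
  assert (Hafter : forall X, In X l -> regular X /\ temperature X <= t).
  { intros X HX. split; [auto|]. destruct (Hcold X HX) as [HN|]; [|lra].
    rewrite temperature_number by exact HN. exact t_ge0. }
  pose proof (scores_sum_cooled_after t l t_ge0 Hafter). pose proof (frozen_bounds Hcold). tauto.
Qed.

Lemma sum_no_options_cooled b : options b (sum_list l) = [] -> cooled t l = l.
Proof.
  intro E. rewrite sum_list_options_nil in E. apply cooled_numbers.
  intros X HX. apply (regular_nil_number b); auto.
Qed.

Lemma scores_sum_cooled_frozen pre X post : l = pre ++ X :: post ->
  is_number X = false -> temperature X < t ->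
  Ls (sum_list (cooled t l)) = Ls (sum_list (cooled t pre ++ cooled t post)) + value X /\
  Rs (sum_list (cooled t l)) = Rs (sum_list (cooled t pre ++ cooled t post)) + value X.
Proof.
  intros -> HN Ht. rewrite cooled_app_cons, cool_frozen by assumption.
  apply scores_sum_list_num.
Qed.

Lemma regular_cooled_rest pre X post : l = pre ++ X :: post ->
  forall Y, In Y (cooled t pre ++ cooled t post) -> regular Y.
Proof.
  intros El Y HY. unfold cooled in HY. rewrite <- map_app in HY. apply in_map_iff in HY as [Z [<- HZ]].
  apply regular_cool; [| exact t_ge0]. apply regular_components. rewrite El.
  apply in_app_iff in HZ as [HZ|HZ]; apply in_app_iff; [left | right; right]; exact HZ.
Qed.

Lemma regular_option_cooled b pre X post x : l = pre ++ X :: post -> In x (options b X) ->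
  regular (cool x t).
Proof.
  intros El Hx. apply regular_cool; [| exact t_ge0]. eapply regular_option; [| exact Hx].
  apply regular_components. rewrite El. apply in_or_app. right. left. reflexivity.
Qed.

Lemma regular_component pre X post : l = pre ++ X :: post -> regular X.
Proof. intros El. apply regular_components. rewrite El. apply in_or_app. right. left. reflexivity. Qed.

Lemma Ls_sum_le_cooled : Ls (sum_list l) <= Ls (sum_list (cooled t l)) + t.
Proof.
  destruct (nil_or_not (options true (sum_list l))) as [E|E].
  { rewrite (sum_no_options_cooled true E). lra. }
  apply Ls_le_bound; [exact E|]. intros z Hz.
  apply in_options_sum_list in Hz as [pre [X [post [x [El [Hx ->]]]]]].
  destruct (band_options pre X post x true El Hx) as [_ [_ Hband]].
  rewrite cooled_app_cons in Hband.
  pose proof (option_not_number true X x Hx) as HN.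
  destruct (Rle_lt_dec t (temperature X)) as [Ht|Ht].
  - pose proof (hot_option_in_sum_cooled true t pre X post x Hx HN Ht) as Hin. rewrite <- El in Hin.
    pose proof (Ls_ge_option _ _ Hin).
    pose proof (scores_sum_list_add_num (cool x t) (- t) (cooled t pre) (cooled t post)).
    cbn [cooling_shift] in *. lra.
  - pose proof (sum_list_component_bounds (cool x t) (cooled t pre) (cooled t post)
      (regular_option_cooled true pre X post x El Hx) (regular_cooled_rest pre X post El)).
    pose proof (scores_sum_cooled_frozen pre X post El HN Ht).
    pose proof (proj1 (frozen_option_bounds X t (regular_component pre X post El) HN Ht) x Hx).
    lra.
Qed.

Lemma cooled_le_Rs_sum : Rs (sum_list (cooled t l)) - t <= Rs (sum_list l).
Proof.
  destruct (nil_or_not (options false (sum_list l))) as [E|E].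
  { rewrite (sum_no_options_cooled false E). lra. }
  apply Rs_ge_bound; [exact E|]. intros z Hz.
  apply in_options_sum_list in Hz as [pre [X [post [x [El [Hx ->]]]]]].
  destruct (band_options pre X post x false El Hx) as [[Hband _] _].
  rewrite cooled_app_cons in Hband.
  pose proof (option_not_number false X x Hx) as HN.
  destruct (Rle_lt_dec t (temperature X)) as [Ht|Ht].
  - pose proof (hot_option_in_sum_cooled false t pre X post x Hx HN Ht) as Hin. rewrite <- El in Hin.
    pose proof (Rs_le_option _ _ Hin).
    pose proof (scores_sum_list_add_num (cool x t) t (cooled t pre) (cooled t post)).
    cbn [cooling_shift] in *. lra.
  - pose proof (sum_list_component_bounds (cool x t) (cooled t pre) (cooled t post)
      (regular_option_cooled false pre X post x El Hx) (regular_cooled_rest pre X post El)).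
    pose proof (scores_sum_cooled_frozen pre X post El HN Ht).
    pose proof (proj2 (frozen_option_bounds X t (regular_component pre X post El) HN Ht) x Hx).
    lra.
Qed.

Lemma Ls_cooled_le_sum : Ls (sum_list (cooled t l)) <= Ls (sum_list l).
Proof.
  destruct (nil_or_not (options true (sum_list (cooled t l)))) as [E|E].
  { pose proof (cooled_sum_no_options true E). lra. }
  destruct (Ls_attained _ E) as [z [Hz ->]].
  apply options_sum_cooled in Hz as [pre [X [post [x [El [Hx [HN [Ht ->]]]]]]]].
  destruct (band_options pre X post x true El Hx) as [_ [Hband _]].
  rewrite cooled_app_cons in Hband.
  pose proof (scores_sum_list_add_num (cool x t) (- t) (cooled t pre) (cooled t post)).
  assert (Hin : In (sum_list (pre ++ x :: post)) (options true (sum_list l)))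
    by (apply in_options_sum_list; exists pre, X, post, x; auto).
  pose proof (Ls_ge_option _ _ Hin). cbn [cooling_shift] in *. lra.
Qed.

Lemma Rs_sum_le_cooled : Rs (sum_list l) <= Rs (sum_list (cooled t l)).
Proof.
  destruct (nil_or_not (options false (sum_list (cooled t l)))) as [E|E].
  { pose proof (cooled_sum_no_options false E). lra. }
  destruct (Rs_attained _ E) as [z [Hz ->]].
  apply options_sum_cooled in Hz as [pre [X [post [x [El [Hx [HN [Ht ->]]]]]]]].
  destruct (band_options pre X post x false El Hx) as [Hband _].
  rewrite cooled_app_cons in Hband.
  pose proof (scores_sum_list_add_num (cool x t) t (cooled t pre) (cooled t post)).
  assert (Hin : In (sum_list (pre ++ x :: post)) (options false (sum_list l)))
    by (apply in_options_sum_list; exists pre, X, post, x; auto).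
  pose proof (Rs_le_option _ _ Hin). cbn [cooling_shift] in *. lra.
Qed.

Lemma cooling_band_step : cooling_band t l.
Proof.
  pose proof Ls_sum_le_cooled. pose proof cooled_le_Rs_sum.
  pose proof Ls_cooled_le_sum. pose proof Rs_sum_le_cooled.
  split; split; assumption.
Qed.

End BandStep.

Definition list_size (l : list game) : nat := list_sum (map game_size l).

Lemma list_size_option b pre X post x : In x (options b X) ->
  (list_size (pre ++ x :: post) < list_size (pre ++ X :: post))%nat.
Proof.
  intro Hx. unfold list_size. rewrite !map_app, !list_sum_app. cbn.
  pose proof (game_size_option b X x Hx). lia.
Qed.

Lemma length_filter_le {A} (p q : A -> bool) l :
  (forall x, In x l -> p x = true -> q x = true) -> (length (filter p l) <= length (filter q l))%nat.
Proof.
  induction l as [|y l IH]; cbn; intro H; [lia|].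
  specialize (IH (fun x Hx => H x (or_intror Hx))).
  destruct (p y) eqn:Ep; [rewrite (H y (or_introl eq_refl) Ep); cbn; lia|].
  destruct (q y); cbn; lia.
Qed.

Lemma length_filter_lt {A} (p q : A -> bool) l :
  (forall x, In x l -> p x = true -> q x = true) -> (exists x, In x l /\ q x = true /\ p x = false) ->
  (length (filter p l) < length (filter q l))%nat.
Proof.
  induction l as [|y l IH]; cbn; intros H [x [Hx [Hq Hp]]]; [destruct Hx|].
  pose proof (length_filter_le p q l (fun x Hx => H x (or_intror Hx))).
  destruct Hx as [<-|Hx]; [rewrite Hp, Hq; cbn; lia|].
  specialize (IH (fun x Hx => H x (or_intror Hx)) (ex_intro _ x (conj Hx (conj Hq Hp)))).
  destruct (p y) eqn:Ep; [rewrite (H y (or_introl eq_refl) Ep); cbn; lia|].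
  destruct (q y); cbn; lia.
Qed.

Fixpoint position_list (g : game) : list game :=
  match g with Game l r => g :: side_position_list l ++ side_position_list r end
with side_position_list (s : side) : list game :=
  match s with Empty _ => [] | Opts h hs => position_list h ++ flat_map position_list hs end.

Lemma position_list_option b x g : In x (options b g) -> incl (position_list x) (position_list g).
Proof.
  assert (Hside : forall s, In x (side_opts s) -> incl (position_list x) (side_position_list s)).
  { intros [a|h hs] Hx; [destruct Hx|]. cbn in Hx |- *. destruct Hx as [<-|Hx].
    - apply incl_appl, incl_refl.
    - apply incl_appr. intros k Hk. apply in_flat_map. eauto. }
  destruct g as [l r], b; intros Hx k Hk; right; apply in_or_app; [left | right]; apply (Hside _ Hx k Hk).
Qed.

Lemma In_position_list k g : position k g -> In k (position_list g).
Proof.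
  induction 1 as [g|k h g Ho Hp IH]; [destruct g; left; reflexivity|].
  destruct Ho as [Ho|Ho];
    [apply (position_list_option true h g Ho) | apply (position_list_option false h g Ho)]; exact IH.
Qed.

Lemma positions_after_move G b pre X post x :
  (forall Y, In Y (pre ++ X :: post) -> position Y G) -> In x (options b X) ->
  forall Y, In Y (pre ++ x :: post) -> position Y G.
Proof.
  intros H Hx Y HY. apply in_app_iff in HY as [HY|[<-|HY]].
  - apply H, in_or_app. left. exact HY.
  - eapply position_trans; [eapply option_position, Hx|].
    apply H, in_or_app. right. left. reflexivity.
  - apply H, in_or_app. right. right. exact HY.
Qed.

Section PositionsOfG.

Variable G : game.
Hypothesis RG : regular G.

Definition colder_than (t : R) (P : game) : bool :=
  negb (is_number P) && (if Rlt_dec (temperature P) t then true else false).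

Definition cold_count (t : R) : nat := length (filter (colder_than t) (position_list G)).

Lemma cold_count_lt X t : position X G -> is_number X = false -> temperature X < t ->
  (cold_count (temperature X) < cold_count t)%nat.
Proof.
  intros HX HN Ht. apply length_filter_lt.
  - intros P _. unfold colder_than. destruct (is_number P); [discriminate|].
    destruct (Rlt_dec (temperature P) (temperature X)), (Rlt_dec (temperature P) t); auto; lra.
  - exists X. split; [apply In_position_list, HX|]. unfold colder_than. rewrite HN.
    destruct (Rlt_dec (temperature X) t), (Rlt_dec (temperature X) (temperature X)); auto; lra.
Qed.

Theorem cooling_band_positions t l : 0 <= t -> (forall X, In X l -> position X G) -> cooling_band t l.
Proof.
  revert l. induction t as [t IHt] using (induction_ltof1 _ cold_count). intros l Ht HlG.
  induction l as [l IHl] using (induction_ltof1 _ list_size).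
  assert (Rl : forall X, In X l -> regular X) by (intros X HX; exact (regular_position G X RG (HlG X HX))).
  apply cooling_band_step; [exact Ht | exact Rl | |].
  - intros pre X post x b -> Hx. apply IHl;
      [exact (list_size_option b pre X post x Hx) | exact (positions_after_move G b pre X post x HlG Hx)].
  - intros Hcold. apply sum_value_bounds; [exact Rl|]. intros X HX HN.
    destruct (Hcold X HX) as [E|HT]; [congruence|].
    apply IHt; [exact (cold_count_lt X t (HlG X HX) HN HT) | exact (temperature_nonneg X (Rl X HX)) |].
    exact HlG.
Qed.

End PositionsOfG.

Lemma shifted_nsum_sum_list G n : shifted 0 (nsum (S n) G) (sum_list (repeat G (S n))).
Proof.
  induction n as [|n IH]; [apply shifted_add_num|].
  pose proof (shifted_add _ _ _ _ _ _ (shifted_refl G) IH) as H. rewrite Rplus_0_r in H. exact H.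
Qed.

Lemma sum_value_repeat G n : sum_value (repeat G n) = INR n * value G.
Proof.
  induction n as [|n IH]; [cbn; lra|].
  change (sum_value (repeat G (S n))) with (value G + sum_value (repeat G n)).
  rewrite IH, S_INR. lra.
Qed.

Lemma nsum_scores_near G n : regular G ->
  INR (S n) * value G <= Ls (nsum (S n) G) <= INR (S n) * value G + temperature G /\
  INR (S n) * value G - temperature G <= Rs (nsum (S n) G) <= INR (S n) * value G.
Proof.
  intro RG. pose proof (temperature_nonneg G RG) as T0.
  assert (Hpos : forall X, In X (repeat G (S n)) -> position X G)
    by (intros X HX; rewrite (repeat_spec _ _ _ HX); apply pos_refl).
  pose proof (cooling_band_positions G RG _ _ T0 Hpos) as Hband.
  destruct (scores_sum_cooled_after (temperature G) (repeat G (S n)) T0) as [E1 E2].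
  { intros X HX. rewrite (repeat_spec _ _ _ HX). split; [exact RG | lra]. }
  destruct (shifted_scores _ _ _ (shifted_nsum_sum_list G n)) as [S1 S2].
  rewrite sum_value_repeat in E1, E2. unfold cooling_band in Hband. lra.
Qed.

Lemma Un_cv_div_of_near (u : nat -> R) v C : 0 <= C ->
  (forall n, INR (S n) * v - C <= u n <= INR (S n) * v + C) -> Un_cv (fun n => u n / INR (S n)) v.
Proof.
  intros HC H eps Heps.
  destruct (archimed_cor1 (eps / (C + 1))) as [N [HN HN0]]; [apply Rdiv_lt_0_compat; lra|].
  exists N. intros n Hn. unfold R_dist.
  assert (HSn : 0 < INR (S n)) by (apply lt_0_INR; lia).
  assert (HNn : INR N <= INR (S n)) by (apply le_INR; lia).
  assert (HNpos : 0 < INR N) by (apply lt_0_INR; lia).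
  replace (u n / INR (S n) - v) with ((u n - INR (S n) * v) / INR (S n)) by (field; lra).
  unfold Rdiv at 1. rewrite Rabs_mult, (Rabs_pos_eq (/ INR (S n))) by (left; apply Rinv_0_lt_compat, HSn).
  apply Rle_lt_trans with (C / INR (S n)).
  - apply Rmult_le_compat_r; [left; apply Rinv_0_lt_compat, HSn|]. apply Rabs_le. specialize (H n). lra.
  - apply Rle_lt_trans with (C * (eps / (C + 1))).
    + unfold Rdiv. apply Rmult_le_compat_l; [exact HC|].
      apply Rle_trans with (/ INR N); [apply Rinv_le_contravar; lra | lra].
    + assert (0 < eps / (C + 1)) by (apply Rdiv_lt_0_compat; lra).
      replace (C * (eps / (C + 1))) with (eps - eps / (C + 1)) by (field; lra). lra.
Qed.

Theorem mainTheorem4 (G : game) :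
  dicotic G -> nonzugzwang G -> terminals_are_numbers G ->
  Ls (cool G (temperature G)) = Rs (cool G (temperature G)) /\
  Un_cv (fun n => Ls (nsum (S n) G) / INR (S n)) (Ls (cool G (temperature G))) /\
  Un_cv (fun n => Rs (nsum (S n) G) / INR (S n)) (Ls (cool G (temperature G))).
Proof.
  intros Hdic Hnz Hterm.
  pose proof (regular_of_hypotheses G Hdic Hnz Hterm) as RG.
  pose proof (temperature_nonneg G RG) as T0.
  destruct (scores_cool_after G _ RG (Rle_refl _)) as [_ Hflat].
  change (Ls (cool G (temperature G))) with (value G).
  split; [exact (eq_sym Hflat)|].
  split; apply (Un_cv_div_of_near _ _ (temperature G) T0); intro n;
    pose proof (nsum_scores_near G n RG); lra.
Qed.
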